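(* Let $\mathcal N$ be a network with parties $A_1,\dots,A_n$ all of whose sources are bipartite, let $p$ be the output distribution of a causally consistent model on $\mathcal N$ (finite output alphabets), and let $f_i$ be arbitrary real-valued functions of the outputs $a_i$. Then for every sign function $\epsilon$ on $\mathcal N$ and every sign matrix $\Gamma_\epsilon$ associated to $\epsilon$, the Schur product $\mathcal C(f_1,\dots,f_n)\circ\Gamma_\epsilon$ is positive semidefinite.
   Context: A network $\mathcal N$ is a bipartite graph between sources $S_\alpha$ and parties $A_i$ ($i=1,\dots,n$); $\alpha\to i$ means $S_\alpha$ is adjacent to $A_i$; no isolated vertices, and no two sources with comparable sets of adjacent parties. Here every source is adjacent to exactly two parties. Covariance matrix: $\mathcal C(f_1,\dots,f_n)_{ij}=\mathbb E[\bar f_i f_j]-\mathbb E[\bar f_i]\,\mathbb E[f_j]$. The Schur product is $(M\circ N)_{ij}=M_{ij}N_{ij}$. A sign function $\epsilon$ assigns $\epsilon(\alpha)\in\{\pm1\}$ to each source. A sign matrix $\Gamma_\epsilon=(\gamma_{ij})$ is a real symmetric $n\times n$ matrix with $\gamma_{ii}=1$ and $\gamma_{ij}=\epsilon(\alpha)$ whenever $i\neq j$ and $\alpha\to i,j$; entries $\gamma_{ij}$ for $i\ne j$ sharing no source are arbitrary. Non-fanout inflation of order $d\ge 2$: choose, for every pair $(\alpha,i)$ with $\alpha\to i$, a permutation $\pi_i^\alpha$ of $\{1,\dots,d\}$. The inflated network has parties $A_i^{(k)}$ and sources $S_\alpha^{(k)}$ ($1\le k\le d$), with $S_\alpha^{(k)}$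 adjacent to $A_i^{((\pi_i^\alpha)^{-1}(k))}$ whenever $\alpha\to i$, and no other adjacencies. Causally consistent model on $\mathcal N$: a joint distribution $p(a_1,\dots,a_n)$ of the outputs of $\mathcal N$ together with, for every non-fanout inflation of every order $d\ge2$, a joint distribution of the outputs $a_i^{(k)}$ of its parties, such that: (C0) if $A_i\neq A_j$ share no source in $\mathcal N$, then $p(a_i,a_j)=p(a_i)p(a_j)$; (C1) in every inflation, each $a_i^{(k)}$ has marginal $p(a_i)$, and if $A_i^{(k)}$ and $A_j^{(l)}$ with $i\neq j$ share a source in the inflation, then $(a_i^{(k)},a_j^{(l)})$ has joint distribution $p(a_i,a_j)$; (C2) in every inflation, if two distinct parties share no source, the joint distribution of their outputs is the product of their marginals. *)

From HB Require Import structures.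
From mathcomp Require Import all_boot all_order all_algebra.
From mathcomp Require Import perm.
From mathcomp Require Import reals.
Set Implicit Arguments. Unset Strict Implicit. Unset Printing Implicit Defensive.
Import Order.TTheory GRing.Theory Num.Theory.
Local Open Scope ring_scope.

Definition outcfg (I : finType) (T : I -> finType) := {dffun forall i : I, T i}.

Definition is_distr (R : numDomainType) (I : finType) (T : I -> finType)
  (P : outcfg T -> R) : Prop :=
  (forall o, 0 <= P o) /\ \sum_(o : outcfg T) P o = 1.

Definition marg1 (R : numDomainType) (I : finType) (T : I -> finType)
  (P : outcfg T -> R) (x : I) (a : T x) : R :=
  \sum_(o : outcfg T | o x == a) P o.
Arguments marg1 {R I T} P x a.

Definition marg2 (R : numDomainType) (I : finType) (T : I -> finType)
  (P : outcfg T -> R) (x y : I) (a : T x) (b : T y) : R :=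
  \sum_(o : outcfg T | (o x == a) && (o y == b)) P o.
Arguments marg2 {R I T} P x y a b.

(** A network: sources [S], parties ['I_n], [adj s i] means S_s -> A_i. *)
Definition bipartite_network (n : nat) (S : finType) (adj : S -> 'I_n -> bool)
  : Prop :=
  [/\ forall i : 'I_n, exists s : S, adj s i,
      forall s : S, exists i : 'I_n, adj s i,
      forall s t : S, s != t -> ~ (forall i, adj s i -> adj t i)
    & forall s : S, #|[pred i : 'I_n | adj s i]| = 2%N ].

Definition share (n : nat) (S : finType) (adj : S -> 'I_n -> bool)
  (i j : 'I_n) : bool := [exists s, adj s i && adj s j].

(** Non-fanout inflation of order d given permutations [pi s i] (used only
    when [adj s i]): party A_i^(k) is the pair (i,k) and it is adjacent to
    the source S_s^(pi s i k) whenever adj s i. *)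
Definition inf_share (n d : nat) (S : finType) (adj : S -> 'I_n -> bool)
  (pi : S -> 'I_n -> {perm 'I_d}) (x y : 'I_n * 'I_d) : bool :=
  [exists s, [&& adj s x.1, adj s y.1 & pi s x.1 x.2 == pi s y.1 y.2]].

Definition inf_alph (n d : nat) (O : 'I_n -> finType) (x : 'I_n * 'I_d) : finType :=
  O x.1.

(** Causally consistent model: [p] is the distribution on the network,
    [q d pi] the distribution on the inflation of order d with permutations
    pi (conditions imposed for d >= 2). *)
Definition causally_consistent (R : numDomainType) (n : nat) (S : finType)
  (adj : S -> 'I_n -> bool) (O : 'I_n -> finType)
  (p : outcfg O -> R)
  (q : forall d : nat, (S -> 'I_n -> {perm 'I_d}) -> outcfg (@inf_alph n d O) -> R)
  : Prop :=
  [/\ is_distr p,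
      forall i j : 'I_n, i != j -> ~~ share adj i j ->
        forall (a : O i) (b : O j),
          marg2 p i j a b = marg1 p i a * marg1 p j b
    & forall (d : nat) (pi : S -> 'I_n -> {perm 'I_d}), (1 < d)%N ->
      [/\ is_distr (q d pi),
          forall (x : 'I_n * 'I_d) (a : O x.1),
            marg1 (q d pi) x a = marg1 p x.1 a,
          forall (x y : 'I_n * 'I_d), x.1 != y.1 -> inf_share adj pi x y ->
            forall (a : O x.1) (b : O y.1),
              marg2 (q d pi) x y a b = marg2 p x.1 y.1 a b
        &
          forall (x y : 'I_n * 'I_d), x != y -> ~~ inf_share adj pi x y ->
            forall (a : O x.1) (b : O y.1),
              marg2 (q d pi) x y a b = marg1 (q d pi) x a * marg1 (q d pi) y b ] ].

Definition expect (R : numDomainType) (I : finType) (T : I -> finType)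
  (P : outcfg T -> R) (g : outcfg T -> R) : R :=
  \sum_(o : outcfg T) P o * g o.

(** covariance matrix C(f_1,...,f_n) (real-valued f_i, so no conjugation) *)
Definition covmx (R : numDomainType) (n : nat) (O : 'I_n -> finType)
  (p : outcfg O -> R) (f : forall i : 'I_n, O i -> R) : 'M[R]_n :=
  \matrix_(i, j) (expect p (fun o => f i (o i) * f j (o j))
                  - expect p (fun o => f i (o i)) * expect p (fun o => f j (o j))).

Definition schur (R : numDomainType) (m n : nat) (M N : 'M[R]_(m, n)) : 'M[R]_(m, n) :=
  \matrix_(i, j) (M i j * N i j).

Definition sign_function (R : numDomainType) (S : finType) (eps : S -> R) : Prop :=
  forall s, eps s = 1 \/ eps s = -1.

Definition sign_matrix (R : numDomainType) (n : nat) (S : finType)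
  (adj : S -> 'I_n -> bool) (eps : S -> R) (G : 'M[R]_n) : Prop :=
  [/\ G^T = G,
      forall i, G i i = 1
    & forall (i j : 'I_n) (s : S), i != j -> adj s i -> adj s j -> G i j = eps s].

Definition psd (R : numDomainType) (n : nat) (M : 'M[R]_n) : Prop :=
  M^T = M /\ forall v : 'cV[R]_n, 0 <= (v^T *m M *m v) 0 0.

From HB Require Import structures.
From mathcomp Require Import all_boot all_order all_algebra.
From mathcomp Require Import perm.
From mathcomp Require Import reals ring lra.
Set Implicit Arguments. Unset Strict Implicit. Unset Printing Implicit Defensive.
Import Order.TTheory GRing.Theory Num.Theory.
Local Open Scope ring_scope.

(** Use the non-fanout inflation of order 2 in which, for every source [s]
    joining parties [i < j], the copies are wired "straight" (A_i^(k) and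
    A_j^(k) share S_s^(k)) if [eps s = 1] and "crossed" (A_i^(k) shares
    S_s^(k) with A_j^(1-k)) if [eps s = -1].  By (C1)/(C2) the covariance of
    [f_i(a_i^(k))] and [f_j(a_j^(l))] in the inflation is [C i j] when the two
    copies share a source and 0 otherwise; together with (C0) this gives
      \sum_(k,l < 2) (-1)^k (-1)^l Cov(f_i(a_i^(k)), f_j(a_j^(l))) = 2 C_ij G_ij.
    A covariance matrix is positive semidefinite, so testing the inflated one
    against the vector [w (i,k) = v_i (-1)^k] shows
    [2 v^T (C o G) v >= 0]. *)

Section Covariance.
Variables (R : numDomainType) (I : finType) (T : I -> finType).
Implicit Types (P : outcfg T -> R) (g h : outcfg T -> R).

Definition covar P g h : R :=
  expect P (fun o => (g o - expect P g) * (h o - expect P h)).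

Lemma covarE P g h :
  is_distr P ->
  covar P g h = expect P (fun o => g o * h o) - expect P g * expect P h.
Proof.
move=> [_ P1]; rewrite /covar /expect.
set Eg := \sum_o P o * g o; set Eh := \sum_o P o * h o.
have -> : \sum_o P o * ((g o - Eg) * (h o - Eh)) =
    \sum_o (P o * (g o * h o) - Eh * (P o * g o) - Eg * (P o * h o)
            + Eg * Eh * P o).
  by apply: eq_bigr => o _; ring.
rewrite big_split /= !sumrB -!mulr_sumr P1 -/Eg -/Eh; ring.
Qed.

Lemma covarC P g h : covar P g h = covar P h g.
Proof. by apply: eq_bigr => o _; rewrite [X in _ * X]mulrC. Qed.

Lemma expect_marg1 P x (g : T x -> R) :
  expect P (fun o => g (o x)) = \sum_a marg1 P x a * g a.
Proof.
rewrite /expect (partition_big (fun o : outcfg T => o x) predT) //=.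
apply: eq_bigr => a _; rewrite /marg1 big_distrl /=.
by apply: eq_bigr => o /eqP ->.
Qed.

Lemma expect_marg2 P x y (g : T x -> R) (h : T y -> R) :
  expect P (fun o => g (o x) * h (o y))
  = \sum_a \sum_b marg2 P x y a b * (g a * h b).
Proof.
rewrite /expect (partition_big (fun o : outcfg T => o x) predT) //=.
apply: eq_bigr => a _.
rewrite (partition_big (fun o : outcfg T => o y) predT) //=.
apply: eq_bigr => b _; rewrite /marg2 big_distrl /=.
by apply: eq_bigr => o /andP[/eqP -> /eqP ->].
Qed.

Lemma covar_indep P x y (g : T x -> R) (h : T y -> R) :
  is_distr P ->
  (forall a b, marg2 P x y a b = marg1 P x a * marg1 P y b) ->
  covar P (fun o => g (o x)) (fun o => h (o y)) = 0.
Proof.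
move=> distr indep; rewrite covarE // expect_marg2 !expect_marg1 big_distrl.
rewrite -sumrB big1 // => a _; rewrite big_distrr -sumrB big1 // => b _ /=.
by rewrite indep mulrACA subrr.
Qed.

End Covariance.

(** A covariance matrix is positive semidefinite: for any finite family of
    random variables [g x] and weights [w], the quadratic form is the
    expectation of a square. *)
Lemma covar_quad_ge0 (R : realDomainType) (I : finType) (T : I -> finType)
  (P : outcfg T -> R) (X : finType) (g : X -> outcfg T -> R) (w : X -> R) :
  (forall o, 0 <= P o) ->
  0 <= \sum_x \sum_y w x * w y * covar P (g x) (g y).
Proof.
move=> P0.
pose c x o := g x o - expect P (g x).
have -> : \sum_x \sum_y w x * w y * covar P (g x) (g y) =
          \sum_o P o * (\sum_x w x * c x o) ^+ 2.
  transitivity (\sum_o \sum_x \sum_y w x * w y * (P o * (c x o * c y o))).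
    rewrite [RHS]exchange_big; apply: eq_bigr => x _ /=.
    rewrite [RHS]exchange_big; apply: eq_bigr => y _ /=.
    by rewrite /covar /expect mulr_sumr.
  apply: eq_bigr => o _; rewrite expr2 mulr_suml mulr_sumr.
  apply: eq_bigr => x _; rewrite !mulr_sumr; apply: eq_bigr => y _; ring.
by apply: sumr_ge0 => o _; rewrite mulr_ge0 ?sqr_ge0.
Qed.

Section BipartiteNetwork.
Variables (n : nat) (S : finType) (adj : S -> 'I_n -> bool).
Hypothesis net : bipartite_network adj.

Lemma source_parties s i j k :
  i != j -> adj s i -> adj s j -> adj s k -> (k == i) || (k == j).
Proof.
move=> ij si sj sk; apply/negPn/negP => /norP [ki kj].
have [_ _ _ card2] := net; have := card2 s.
by rewrite (cardD1 i) (cardD1 j) (cardD1 k) !inE si sj sk eq_sym ij /= ki kj.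
Qed.

(** Two distinct parties share at most one source: two sources with the
    same pair of parties would have comparable neighbourhoods. *)
Lemma source_unique s t i j :
  i != j -> adj s i -> adj s j -> adj t i -> adj t j -> s = t.
Proof.
move=> ij si sj ti tj; case: (eqVneq s t) => // st; exfalso.
have [_ _ incomparable _] := net; apply: (incomparable s t st) => k sk.
by case/orP: (source_parties ij si sj sk) => /eqP ->.
Qed.

Lemma other_end_lt s i j :
  i != j -> adj s i -> adj s j ->
  [exists j' : 'I_n, adj s j' && (j' < i)%N] = (j < i)%N.
Proof.
move=> ij si sj; apply/existsP/idP => [[j' /andP [sj' lt_j'i]]|lt_ji].
  case/orP: (source_parties ij si sj sj') => /eqP eq_j'; rewrite -eq_j' //.
  by rewrite eq_j' ltnn in lt_j'i.
by exists j; rewrite sj.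
Qed.

End BipartiteNetwork.

(** In any inflation two distinct copies of the same party share no source,
    since each source of the network has one copy per index. *)
Lemma inf_share_same_party (n d : nat) (S : finType) (adj : S -> 'I_n -> bool)
  (pi : S -> 'I_n -> {perm 'I_d}) i (k l : 'I_d) :
  inf_share adj pi (i, k) (i, l) -> k = l.
Proof. by case/existsP => s /and3P [_ _ /eqP /perm_inj]. Qed.

Definition swap2 : {perm 'I_2} := tperm ord0 ord_max.

Lemma swap2E (k l : 'I_2) : (swap2 k == l) = (k != l).
Proof.
have I2 (m : 'I_2) : m = ord0 \/ m = ord_max.
  by case: m => [[|[|m]] lt_m2] //; [left|right]; apply/val_inj.
by rewrite /swap2; case: (I2 k) => ->; case: (I2 l) => ->; rewrite ?tpermL ?tpermR.
Qed.

(** The wiring of the signed inflation: along a source [s] with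
    [eps s = -1], the copies of its larger party are swapped. *)
Definition sign_perm (R : numDomainType) (n : nat) (S : finType)
  (adj : S -> 'I_n -> bool) (eps : S -> R) (s : S) (i : 'I_n) : {perm 'I_2} :=
  if (eps s != 1) && [exists j : 'I_n, adj s j && (j < i)%N] then swap2 else 1%g.

Lemma sign_inf_share (R : realDomainType) (n : nat) (S : finType)
  (adj : S -> 'I_n -> bool) (eps : S -> R) s i j (k l : 'I_2) :
  bipartite_network adj -> sign_function eps -> i != j -> adj s i -> adj s j ->
  inf_share adj (sign_perm adj eps) (i, k) (j, l) = ((k == l) == (eps s == 1)).
Proof.
move=> net sgn ij si sj.
have -> : inf_share adj (sign_perm adj eps) (i, k) (j, l) =
          (sign_perm adj eps s i k == sign_perm adj eps s j l).
  apply/existsP/idP => [[t /and3P [ti tj]]|same]; last by exists s; rewrite si sj.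
  by rewrite -(source_unique net ij si sj ti tj).
rewrite /sign_perm (other_end_lt net ij si sj).
have ji : j != i by rewrite eq_sym.
rewrite (other_end_lt net ji sj si).
case: (sgn s) => ->; first by rewrite eqxx /= !perm1 eqb_id.
have -> : ((-1 : R) == 1) = false by apply/negbTE/eqP => minus1_1; lra.
case: ltngtP => [lt_ij|lt_ji|/val_inj eq_ij] /=; rewrite ?perm1.
- by rewrite swap2E; case: (k == l).
- by rewrite eq_sym swap2E eq_sym; case: (k == l).
- by rewrite eq_ij eqxx in ij.
Qed.

Section InflationCovariance.
Variables (R : numDomainType) (n : nat) (S : finType) (adj : S -> 'I_n -> bool).
Variables (O : 'I_n -> finType) (p : outcfg O -> R).
Variable q : forall d : nat, (S -> 'I_n -> {perm 'I_d}) -> outcfg (@inf_alph n d O) -> R.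
Variable f : forall i : 'I_n, O i -> R.
Hypothesis model : causally_consistent adj p q.
Arguments f : clear implicits.
Arguments q : clear implicits.

Definition obs (i : 'I_n) (o : outcfg O) : R := f i (o i).
Definition inf_obs (d : nat) (x : 'I_n * 'I_d) (o : outcfg (@inf_alph n d O)) : R :=
  f x.1 (o x).

Lemma covmx_covar i j : covmx p f i j = covar p (obs i) (obs j).
Proof. by case: model => distr _ _; rewrite mxE covarE. Qed.

Lemma covmx_sym : (covmx p f)^T = covmx p f.
Proof. by apply/matrixP => i j; rewrite mxE !covmx_covar covarC. Qed.

Lemma covmx_no_share i j : i != j -> ~~ share adj i j -> covmx p f i j = 0.
Proof.
have [distr C0 _] := model => ij no_share.
by rewrite covmx_covar (covar_indep _ _ distr (C0 i j ij no_share)).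
Qed.

(** The covariance of two inflated parties: a variance of the network on
    the diagonal, the network covariance of the underlying parties if the
    copies share a source (C1), and zero otherwise (C2). *)
Lemma inf_covar d (pi : S -> 'I_n -> {perm 'I_d}) (x y : 'I_n * 'I_d) :
  (1 < d)%N ->
  covar (q d pi) (inf_obs x) (inf_obs y)
  = if x == y then covmx p f x.1 x.1
    else if inf_share adj pi x y then covmx p f x.1 y.1 else 0.
Proof.
have [distr _ inflations] := model => d_gt1.
have [inf_distr C1 C1' C2] := inflations d pi d_gt1.
have mean (z : 'I_n * 'I_d) : expect (q d pi) (inf_obs z) = expect p (obs z.1).
  rewrite /inf_obs /obs !expect_marg1.
  by apply: eq_bigr => a _; rewrite C1.
case: eqVneq => [<-|xy]; last case: ifP => [shared|not_shared]; last first.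
- exact: (covar_indep _ _ inf_distr (C2 x y xy (negbT not_shared))).
- have x12 : x.1 != y.1.
    apply: contra xy; case: x y shared => [i k] [j l] /= shared /eqP eq_ij.
    by move: shared; rewrite -eq_ij => /inf_share_same_party ->.
  rewrite covarE // !mean covmx_covar covarE //; congr (_ - _).
  rewrite /inf_obs /obs !expect_marg2.
  by apply: eq_bigr => a _; apply: eq_bigr => b _; rewrite C1'.
- rewrite covarE // !mean covmx_covar covarE //; congr (_ - _).
  rewrite /inf_obs /obs (@expect_marg1 _ _ _ _ x (fun a => f x.1 a * f x.1 a)).
  rewrite (@expect_marg1 _ _ _ _ x.1 (fun a => f x.1 a * f x.1 a)).
  by apply: eq_bigr => a _; rewrite C1.
Qed.

End InflationCovariance.

Lemma quad_formE (R : comNzRingType) (n : nat) (A : 'M[R]_n) (v : 'cV[R]_n) :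
  (v^T *m A *m v) 0 0 = \sum_i \sum_j v i 0 * v j 0 * A i j.
Proof.
rewrite mxE exchange_big /=; apply: eq_bigr => i _.
by rewrite !mxE big_distrl /=; apply: eq_bigr => j _; rewrite !mxE mulrAC mulrC.
Qed.

Lemma schur_sym (R : numDomainType) (n : nat) (M N : 'M[R]_n) :
  M^T = M -> N^T = N -> (schur M N)^T = schur M N.
Proof.
move=> M_sym N_sym; apply/matrixP => i j.
by rewrite !mxE -[in RHS]M_sym -[in RHS]N_sym !mxE.
Qed.

Lemma sum_pair (R : nmodType) (I J : finType) (F : I * J -> R) :
  \sum_(x : I * J) F x = \sum_i \sum_j F (i, j).
Proof. by rewrite pair_big; apply: eq_bigr => [[]]. Qed.

Definition sign2 (R : numDomainType) (k : 'I_2) : R := (-1) ^+ k.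

Lemma signed_sum2 (R : numDomainType) (b : bool) (c : R) :
  \sum_(k < 2) \sum_(l < 2) sign2 R k * sign2 R l * (if (k == l) == b then c else 0)
  = 2 * ((if b then 1 else -1) * c).
Proof. by rewrite /sign2 !big_ord_recl !big_ord0 /=; case: b => /=; ring. Qed.

Section SignedInflation.
Variables (R : realDomainType) (n : nat) (S : finType) (adj : S -> 'I_n -> bool).
Variables (O : 'I_n -> finType) (p : outcfg O -> R).
Variable q : forall d : nat, (S -> 'I_n -> {perm 'I_d}) -> outcfg (@inf_alph n d O) -> R.
Variables (f : forall i : 'I_n, O i -> R) (eps : S -> R) (G : 'M[R]_n).
Hypotheses (net : bipartite_network adj) (model : causally_consistent adj p q).
Hypotheses (sgn : sign_function eps) (signG : sign_matrix adj eps G).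
Arguments f : clear implicits.
Arguments q : clear implicits.

Let Q := q 2 (sign_perm adj eps).

Lemma sign_inflation_pattern i j :
  exists b : bool,
    (forall k l : 'I_2, covar Q (inf_obs f (i, k)) (inf_obs f (j, l))
                        = if (k == l) == b then covmx p f i j else 0)
    /\ (if b then 1 else -1) * covmx p f i j = covmx p f i j * G i j.
Proof.
have [_ G_diag G_src] := signG.
case: (eqVneq i j) => [<-|ij].
  exists true; split; last by rewrite G_diag mulr1 mul1r.
  move=> k l; rewrite (inf_covar f model) //= eqb_id xpair_eqE eqxx /=.
  case: eqVneq => // kl; case: ifP => // /inf_share_same_party same_copy.
  by rewrite same_copy eqxx in kl.
case: (boolP (share adj i j)) => [/existsP [s /andP [si sj]]|no_share].
  exists (eps s == 1); split.
    move=> k l; rewrite (inf_covar f model) //= xpair_eqE (negbTE ij) /=.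
    by rewrite (sign_inf_share _ _ net sgn ij si sj).
  rewrite (G_src i j s ij si sj) mulrC; case: (sgn s) => ->; first by rewrite eqxx.
  by case: eqP => // minus1_1; move: minus1_1; lra.
exists true; split; last by rewrite (covmx_no_share f model ij no_share) !mulr0 mul0r.
move=> k l; rewrite (inf_covar f model) //= xpair_eqE (negbTE ij) /=.
by rewrite (covmx_no_share f model ij no_share); case: ifP; case: ifP.
Qed.

Lemma signed_pair_sum i j :
  \sum_(k < 2) \sum_(l < 2)
     sign2 R k * sign2 R l * covar Q (inf_obs f (i, k)) (inf_obs f (j, l))
  = 2 * (covmx p f i j * G i j).
Proof.
have [b [pattern signed]] := sign_inflation_pattern i j.
rewrite -signed -signed_sum2; apply: eq_bigr => k _; apply: eq_bigr => l _.
by rewrite pattern.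
Qed.

Lemma signed_inflation_quad (v : 'cV[R]_n) :
  let w (x : 'I_n * 'I_2) := v x.1 0 * sign2 R x.2 in
  \sum_x \sum_y w x * w y * covar Q (inf_obs f x) (inf_obs f y)
  = 2 * (v^T *m schur (covmx p f) G *m v) 0 0.
Proof.
move=> w; rewrite quad_formE mulr_sumr sum_pair; apply: eq_bigr => i _.
rewrite exchange_big /= sum_pair mulr_sumr; apply: eq_bigr => j _.
rewrite exchange_big /= [in RHS]mxE [RHS]mulrCA -signed_pair_sum mulr_sumr.
apply: eq_bigr => k _; rewrite mulr_sumr; apply: eq_bigr => l _.
by rewrite /w /=; ring.
Qed.

End SignedInflation.

Theorem lemma4 (R : realType) (n : nat) (S : finType)
  (adj : S -> 'I_n -> bool) (O : 'I_n -> finType)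
  (p : outcfg O -> R)
  (q : forall d : nat, (S -> 'I_n -> {perm 'I_d}) -> outcfg (@inf_alph n d O) -> R)
  (f : forall i : 'I_n, O i -> R) (eps : S -> R) (G : 'M[R]_n) :
  bipartite_network adj ->
  causally_consistent adj p q ->
  sign_function eps ->
  sign_matrix adj eps G ->
  psd (schur (covmx p f) G).
Proof.
move=> net model sgn signG; have [G_sym _ _] := signG.
split; first by rewrite schur_sym // (covmx_sym f model).
move=> v; have [_ _ inflations] := model.
have [[Q_ge0 _] _ _ _] := inflations 2%N (sign_perm adj eps) isT.
have := covar_quad_ge0 (@inf_obs _ _ _ f 2) (fun x => v x.1 0 * sign2 R x.2) Q_ge0.
by rewrite (signed_inflation_quad f net model sgn signG) pmulr_rge0.
Qed.
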